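(* Let $a,b\in\mathbb{C}$ with $ab\neq0,\ ab\neq1,\ ab\neq-1$. Then the Lie superalgebra $\Gamma$ defined in the context is isomorphic to the Lie subsuperalgebra of $\mathrm{End}(\tilde{\mathcal{W}}^{2|2})$ spanned by the following matrices (writing $u=\tau^{-1}\circ t^{-1}\in\tilde{\mathcal W}$): $$\tilde C_+=(t\tau)I_4,\quad \tilde C=I_4,\quad \tilde C_-=u\,I_4,$$ $$\tilde E_1=E_{12},\ \tilde F_1=E_{21},\ \tilde H_1=E_{11}-E_{22},\ \tilde E_2=E_{43},\ \tilde F_2=E_{34},\ \tilde H_2=E_{33}-E_{44},$$ $$\tilde T_3=(t\tau)E_{13}+aE_{42},\quad \tilde T_2=-(t\tau)E_{14}+aE_{32},\quad \tilde D_4=(t\tau)E_{24}+aE_{31},\quad \tilde D_1=-(t\tau)E_{23}+aE_{41},$$ $$\tilde T_1=bE_{14}+uE_{32},\quad \tilde T_4=bE_{13}-uE_{42},\quad \tilde D_2=bE_{23}+uE_{41},\quad \tilde D_3=bE_{24}-uE_{31}.$$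
   Context: The Lie superalgebra $\Gamma$ (a contraction of $D(2,1;\alpha)$ as $\alpha\to1$) has basis consisting of odd elements $T_1,T_2,T_3,T_4,D_1,D_2,D_3,D_4$ and even elements $E_1,H_1,F_1,E_2,H_2,F_2,C,C_+,C_-$, with the following nonzero brackets: $[T_1,T_3]=[T_2,T_4]=E_1$; $[D_1,D_3]=[D_2,D_4]=F_1$; $[E_1,D_1]=-2T_3$, $[E_1,D_3]=-2T_1$, $[E_1,D_2]=-2T_4$, $[E_1,D_4]=-2T_2$; $[F_1,T_1]=2D_3$, $[F_1,T_3]=2D_1$, $[F_1,T_2]=2D_4$, $[F_1,T_4]=2D_2$; $[E_2,T_1]=-T_4$, $[E_2,T_2]=T_3$, $[E_2,D_4]=D_1$, $[E_2,D_3]=-D_2$; $[F_2,T_4]=T_1$, $[F_2,T_3]=-T_2$, $[F_2,D_1]=-D_4$, $[F_2,D_2]=D_3$; $[E_1,F_1]=-4H_1$, $[E_2,F_2]=-H_2$, $[H_i,E_i]=2E_i$, $[H_i,F_i]=-2F_i$ ($i=1,2$); $[H_1,T_k]=T_k$, $[H_1,D_k]=-D_k$ ($k=1,\dots,4$); $[H_2,T_1]=-T_1$, $[H_2,T_2]=-T_2$, $[H_2,T_3]=T_3$, $[H_2,T_4]=T_4$, $[H_2,D_1]=D_1$, $[H_2,D_2]=D_2$, $[H_2,D_3]=-D_3$, $[H_2,D_4]=-D_4$; $[T_1,D_4]=-2F_2$, $[T_2,D_3]=2F_2$, $[D_1,T_4]=2E_2$, $[D_2,T_3]=-2E_2$;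 $[T_3,D_4]=C_+$, $[T_4,D_3]=C_-$, $[T_1,D_2]=-C_-$, $[T_2,D_1]=-C_+$; $[T_1,D_1]=H_1+H_2-\tfrac{C}{2}$, $[T_2,D_2]=H_1+H_2+\tfrac{C}{2}$, $[T_3,D_3]=H_1-H_2+\tfrac{C}{2}$, $[T_4,D_4]=H_1-H_2-\tfrac{C}{2}$. Brackets obtained from these by super-antisymmetry $[Y,X]=-(-1)^{p(X)p(Y)}[X,Y]$ are understood, and all other brackets of basis elements are zero (in particular $C,C_+,C_-$ are central). $\tilde{\mathcal W}$ is the associative algebra of pseudodifferential symbols on the circle: formal series $A=\sum_{i=-\infty}^{n}a_i(t)\tau^i$ with $a_i\in\mathbb{C}[t,t^{-1}]$, $n\in\mathbb{Z}$, with product $A\circ B=\sum_{n\ge0}\frac1{n!}\,\partial_\tau^nA\,\partial_t^nB$. $\mathrm{End}(\tilde{\mathcal W}^{2|2})$ is the Lie superalgebra of $4\times4$ matrices over $\tilde{\mathcal W}$, rows/columns $1,2$ even and $3,4$ odd (a matrix is even if entries at $(k,l)$ with $k,l$ of different parity vanish, odd if entries with $k,l$ of the same parity vanish), with matrix product computed using $\circ$ and bracket $[X,Y]=XY-(-1)^{p(X)p(Y)}YX$. $E_{kl}$ is the matrix unit at position $(k,l)$, $wE_{kl}$ has $w\in\tilde{\mathcal W}$ there, and $I_4$ is the identity matrix. *)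

From HB Require Import structures.
From mathcomp Require Import all_boot all_order all_algebra.
From mathcomp Require Import boolp classical_sets cardinality fsbigop.
Set Implicit Arguments. Unset Strict Implicit. Unset Printing Implicit Defensive.
Import Order.TTheory GRing.Theory Num.Theory.
Local Open Scope ring_scope.

Section Defs.
Variable K : numClosedFieldType.

(* The Lie superalgebra Gamma, as K^17 with basis gb 0 .. gb 16:       *)
(*   T1 T2 T3 T4 D1 D2 D3 D4 | E1 H1 F1 E2 H2 F2 C C+ C-               *)
(*   0  1  2  3  4  5  6  7  | 8  9  10 11 12 13 14 15 16             *)
Definition gb (k : nat) : 'rV[K]_17 := \row_(j < 17) ((j : nat) == k)%:R.
Definition godd (k : nat) : bool := (k < 8)%N.

Definition iT1 := 0%N. Definition iT2 := 1%N. Definition iT3 := 2%N. Definition iT4 := 3%N.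
Definition iD1 := 4%N. Definition iD2 := 5%N. Definition iD3 := 6%N. Definition iD4 := 7%N.
Definition iE1 := 8%N. Definition iH1 := 9%N. Definition iF1 := 10%N.
Definition iE2 := 11%N. Definition iH2 := 12%N. Definition iF2 := 13%N.
Definition iC := 14%N. Definition iCp := 15%N. Definition iCm := 16%N.

(* The nonzero brackets listed in the paper: ([X,Y], value). *)
Definition gtable : seq (nat * nat * 'rV[K]_17) :=
  [:: (iT1, iT3, gb iE1); (iT2, iT4, gb iE1);
      (iD1, iD3, gb iF1); (iD2, iD4, gb iF1);
      (iE1, iD1, (-2) *: gb iT3); (iE1, iD3, (-2) *: gb iT1);
      (iE1, iD2, (-2) *: gb iT4); (iE1, iD4, (-2) *: gb iT2);
      (iF1, iT1, 2 *: gb iD3); (iF1, iT3, 2 *: gb iD1);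
      (iF1, iT2, 2 *: gb iD4); (iF1, iT4, 2 *: gb iD2);
      (iE2, iT1, - gb iT4); (iE2, iT2, gb iT3); (iE2, iD4, gb iD1); (iE2, iD3, - gb iD2);
      (iF2, iT4, gb iT1); (iF2, iT3, - gb iT2); (iF2, iD1, - gb iD4); (iF2, iD2, gb iD3);
      (iE1, iF1, (-4) *: gb iH1); (iE2, iF2, - gb iH2);
      (iH1, iE1, 2 *: gb iE1); (iH1, iF1, (-2) *: gb iF1);
      (iH2, iE2, 2 *: gb iE2); (iH2, iF2, (-2) *: gb iF2);
      (iH1, iT1, gb iT1); (iH1, iT2, gb iT2); (iH1, iT3, gb iT3); (iH1, iT4, gb iT4);
      (iH1, iD1, - gb iD1); (iH1, iD2, - gb iD2); (iH1, iD3, - gb iD3); (iH1, iD4, - gb iD4);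
      (iH2, iT1, - gb iT1); (iH2, iT2, - gb iT2); (iH2, iT3, gb iT3); (iH2, iT4, gb iT4);
      (iH2, iD1, gb iD1); (iH2, iD2, gb iD2); (iH2, iD3, - gb iD3); (iH2, iD4, - gb iD4);
      (iT1, iD4, (-2) *: gb iF2); (iT2, iD3, 2 *: gb iF2);
      (iD1, iT4, 2 *: gb iE2); (iD2, iT3, (-2) *: gb iE2);
      (iT3, iD4, gb iCp); (iT4, iD3, gb iCm); (iT1, iD2, - gb iCm); (iT2, iD1, - gb iCp);
      (iT1, iD1, gb iH1 + gb iH2 - 2^-1 *: gb iC);
      (iT2, iD2, gb iH1 + gb iH2 + 2^-1 *: gb iC);
      (iT3, iD3, gb iH1 - gb iH2 + 2^-1 *: gb iC);
      (iT4, iD4, gb iH1 - gb iH2 - 2^-1 *: gb iC) ].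

Definition gtab (i j : nat) : 'rV[K]_17 :=
  \sum_(e <- gtable | (e.1.1 == i) && (e.1.2 == j)) e.2.

(* [Y,X] = -(-1)^{p(X)p(Y)} [X,Y]; all other brackets vanish.
   (No pair occurs in gtable in both orders, and no [X,X] is listed.) *)
Definition gbr (i j : nat) : 'rV[K]_17 :=
  gtab i j - (if godd i && godd j then -1 else 1) *: gtab j i.

(* Pseudodifferential symbols: s i j = coefficient of t^j tau^i.       *)
Definition symb := int -> int -> K.

Definition is_symbol (s : symb) : Prop :=
  (exists N : int, forall i j, N < i -> s i j = 0) /\
  (forall i, finite_set [set j | s i j != 0]).

Definition szero : symb := fun _ _ => 0.
Definition sconst (c : K) : symb := fun i j => if (i == 0) && (j == 0) then c else 0.
Definition smono (m n : int) : symb := fun i j => if (i == n) && (j == m) then 1 else 0.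
Definition sadd (A B : symb) : symb := fun i j => A i j + B i j.
Definition sopp (A : symb) : symb := fun i j => - A i j.
Definition sscale (c : K) (A : symb) : symb := fun i j => c * A i j.

Definition ffact (x : int) (n : nat) : K := \prod_(m < n) (x%:~R - m%:R).

(* A o B = sum_{n>=0} 1/n! d_tau^n A d_t^n B.  The coefficient of
   t^l tau^k collects the terms a_{i,j} t^j tau^i (from A) and
   b_{i',j'} t^j' tau^i' (from B) with i + i' - n = k, j + j' - n = l.
   For genuine symbols only finitely many terms are nonzero. *)
Definition sprod (A B : symb) : symb := fun k l =>
  (\sum_(p \in [set: nat * int * int])
     (let: (n, i, j) := p in
      ffact i n * ffact (l + n%:Z - j) n / (n`!)%:R
      * A i j * B (k + n%:Z - i) (l + n%:Z - j)))%R.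

(* End(W~^{2|2}): 4x4 matrices over W~, rows/columns 0,1 even, 2,3 odd *)
(* (paper's 1,2 even and 3,4 odd).                                     *)
Definition smat := 'I_4 -> 'I_4 -> symb.

Definition rpar (k : 'I_4) : bool := (2 <= k)%N. (* true = odd *)
Definition meven (X : smat) : Prop := forall k l, rpar k != rpar l -> X k l = szero.
Definition modd (X : smat) : Prop := forall k l, rpar k == rpar l -> X k l = szero.
Definition mhomog (p : bool) (X : smat) : Prop := if p then modd X else meven X.

Definition mzero : smat := fun _ _ => szero.
Definition madd (X Y : smat) : smat := fun k l => sadd (X k l) (Y k l).
Definition mscale (c : K) (X : smat) : smat := fun k l => sscale c (X k l).
Definition mmul (X Y : smat) : smat := fun k l =>
  \big[sadd/szero]_(m < 4) sprod (X k m) (Y m l).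

Definition mbr (p q : bool) (X Y : smat) : smat :=
  madd (mmul X Y) (mscale (if p && q then 1 else -1) (mmul Y X)).

(* w E_{kl}, with paper's 1-based indices k, l *)
Definition Emat (k l : nat) (w : symb) : smat := fun a b =>
  if ((a : nat).+1 == k) && ((b : nat).+1 == l) then w else szero.
Definition Ediag (w : symb) : smat := fun a b => if a == b then w else szero.

Definition ttau : symb := smono 1 1.
Definition usym : symb := sprod (smono 0 (-1)) (smono (-1) 0).
Definition cst (c : K) : symb := sconst c.

(* The 17 matrices, in the same order as the basis of Gamma. *)
Definition tildeX (a b : K) (k : nat) : smat :=
  match k with
  | 0 => madd (Emat 1 4 (cst b)) (Emat 3 2 usym)
  | 1 => madd (Emat 1 4 (sopp ttau)) (Emat 3 2 (cst a))
  | 2 => madd (Emat 1 3 ttau) (Emat 4 2 (cst a))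
  | 3 => madd (Emat 1 3 (cst b)) (Emat 4 2 (sopp usym))
  | 4 => madd (Emat 2 3 (sopp ttau)) (Emat 4 1 (cst a))
  | 5 => madd (Emat 2 3 (cst b)) (Emat 4 1 usym)
  | 6 => madd (Emat 2 4 (cst b)) (Emat 3 1 (sopp usym))
  | 7 => madd (Emat 2 4 ttau) (Emat 3 1 (cst a))
  | 8 => Emat 1 2 (cst 1)
  | 9 => madd (Emat 1 1 (cst 1)) (Emat 2 2 (cst (-1)))
  | 10 => Emat 2 1 (cst 1)
  | 11 => Emat 4 3 (cst 1)
  | 12 => madd (Emat 3 3 (cst 1)) (Emat 4 4 (cst (-1)))
  | 13 => Emat 3 4 (cst 1)
  | 14 => Ediag (cst 1)
  | 15 => Ediag ttau
  | 16 => Ediag usym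
  | _ => mzero
  end.

Definition in_span (a b : K) (X : smat) : Prop :=
  exists c : 'I_17 -> K,
    X = \big[madd/mzero]_(k < 17) mscale (c k) (tildeX a b k).

End Defs.

(* Basis vector m of Gamma is sent to [weight m] times the m-th matrix of the
   paper.  Everything rests on t tau and u being mutually inverse in W~: the
   coefficients of u = sum_n n! t^(-n-1) tau^(-n-1) satisfy
   u(k-1, l-1) + l u(k, l) = [k = l = 0], which gives t tau o u = u o t tau = 1.
   All entries of the matrices are multiples of 1, t tau and u, so products of
   two entries are multiples of 1, t tau, u, (t tau)^2, u^2, and each bracket
   relation becomes a finite identity checked entrywise and coefficientwise.
   The map is injective with the stated image because the 17 matrices are
   linearly independent, as their coefficients can be read off at the monomials
   1, t tau and u of suitable entries, and because the weights are nonzero when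
   ab is not 0, 1 or -1. *)

From HB Require Import structures.
From mathcomp Require Import all_boot all_order all_algebra.
From mathcomp Require Import boolp classical_sets cardinality fsbigop.
From mathcomp Require Import finmap ring zify.
Set Implicit Arguments. Unset Strict Implicit. Unset Printing Implicit Defensive.
Import GRing.Theory Num.Theory.
Local Open Scope ring_scope.

(* Lets [cbv] decide [godd] on numerals. *)
Lemma leq_leb (m n : nat) : (m <= n)%N = Nat.leb m n.
Proof. by elim: m n => [|m IHm] [|n] //=; rewrite ltnS IHm. Qed.

Section Symbols.
Variable K : numClosedFieldType.
Implicit Types (A B : symb K) (c : K).

Lemma ffact0 (x : int) : ffact K x 0 = 1.
Proof. by rewrite /ffact big_ord0. Qed.

Lemma ffact1 (x : int) : ffact K x 1 = x%:~R.
Proof. by rewrite /ffact big_ord1 subr0. Qed.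

Lemma ffact_small (m n : nat) : (m < n)%N -> ffact K m n = 0.
Proof. by move=> lt_mn; rewrite /ffact (bigD1 (Ordinal lt_mn)) //= subrr mul0r. Qed.

Lemma ffactN1 (n : nat) : ffact K (-1) n = (-1) ^+ n * n`!%:R.
Proof.
elim: n => [|n IHn]; first by rewrite ffact0 mul1r.
rewrite /ffact big_ord_recr /= -/(ffact K (-1) n) IHn factS natrM exprS.
by rewrite -[(-1 : int)%:~R]/(-1 : K) mulrSr; ring.
Qed.

Lemma sprodZl c A B : sprod (sscale c A) B = sscale c (sprod A B).
Proof.
apply/funext => k; apply/funext => l; rewrite /sprod /sscale mulr_fsumr.
by apply: eq_fsbigr => -[[n i] j] _; ring.
Qed.

Lemma sprodZr c A B : sprod A (sscale c B) = sscale c (sprod A B).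
Proof.
apply/funext => k; apply/funext => l; rewrite /sprod /sscale mulr_fsumr.
by apply: eq_fsbigr => -[[n i] j] _; ring.
Qed.

Lemma sprod0l B : sprod (szero K) B = szero K.
Proof.
apply/funext => k; apply/funext => l; rewrite /sprod fsbig1 // => -[[n i] j] _.
by rewrite /szero mulr0 mul0r.
Qed.

Lemma sprod0r A : sprod A (szero K) = szero K.
Proof.
apply/funext => k; apply/funext => l; rewrite /sprod fsbig1 // => -[[n i] j] _.
by rewrite /szero mulr0.
Qed.

(* Only the term n = 0, (i, j) = (0, 0) survives: for n > 0 the factor
   ffact 0 n vanishes. *)
Lemma sprod1l B : sprod (sconst 1) B = B.
Proof.
apply/funext => k; apply/funext => l; rewrite /sprod.
rewrite (fsbigTE [fset (0%N, 0, 0)]%fset); last first.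
  move=> -[[n i] j]; rewrite inE /sconst; case: n => [|n].
    by case: (i =P 0) => [->|_]; case: (j =P 0) => [->|_] //=; rewrite !(mulr0, mul0r).
  by case: (i =P 0) => [->|_] _; [rewrite ffact_small // !mul0r | rewrite /= !(mulr0, mul0r)].
by rewrite big_seq_fset1 /sconst /= !ffact0 !addr0 divr1 !mul1r.
Qed.

Lemma sprod1r A : sprod A (sconst 1) = A.
Proof.
apply/funext => k; apply/funext => l; rewrite /sprod.
rewrite (fsbigTE [fset (0%N, k, l)]%fset); last first.
  move=> -[[n i] j]; rewrite inE /sconst => not_kl.
  case: (k + n%:Z - i =P 0) => [Ei|_]; last by rewrite /= mulr0.
  case: (l + n%:Z - j =P 0) => [Ej|_]; last by rewrite andbF /= mulr0.
  case: n not_kl Ei Ej => [|n] not_kl Ei Ej.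
    by case/negP: not_kl; apply/eqP; congr (_, _, _); lia.
  by rewrite Ej ffact_small // mulr0 !mul0r.
by rewrite big_seq_fset1 /sconst /= !ffact0 !addr0 !subrr /= divr1 !mul1r mulr1.
Qed.

Lemma usymE (k l : int) :
  usym K k l = if (k == l) && (k < 0) then ((`|k|%N).-1)`!%:R else 0.
Proof.
rewrite /usym /sprod /smono.
case: ifP => [/andP[/eqP <- k_neg]|not_diag].
  rewrite (fsbigTE [fset ((`|k|%N).-1, -1, 0)]%fset); last first.
    move=> -[[n i] j]; rewrite inE => not_term.
    case: (i =P -1) => [Ei|_]; last by rewrite /= !mulr0 mul0r.
    case: (j =P 0) => [Ej|_]; last by rewrite /= !mulr0 mul0r.
    case: (k + n%:Z - i =P 0) => [E1|_]; last by rewrite /= !mulr0.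
    case: (k + n%:Z - j =P -1) => [E2|_]; last by rewrite /= !mulr0.
    by case/negP: not_term; apply/eqP; subst; congr (_, _, _); lia.
  rewrite big_seq_fset1 /=.
  have -> : k + ((`|k|%N).-1)%:Z - (-1) = 0 by lia.
  have -> : k + ((`|k|%N).-1)%:Z - 0 = -1 by lia.
  rewrite !eqxx /= !mulr1 !ffactN1 mulrACA -exprMn mulrNN mulr1 expr1n mul1r.
  by rewrite mulfK // pnatr_eq0 -lt0n fact_gt0.
rewrite fsbig1 // => -[[n i] j] _.
case: (i =P -1) => [Ei|_]; last by rewrite /= !mulr0 mul0r.
case: (j =P 0) => [Ej|_]; last by rewrite /= !mulr0 mul0r.
case: (k + n%:Z - i =P 0) => [E1|_]; last by rewrite /= !mulr0.
case: (l + n%:Z - j =P -1) => [E2|_]; last by rewrite /= !mulr0.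
by case/negP: not_diag; subst; apply/andP; split; [apply/eqP|]; lia.
Qed.

Lemma usym_recurrence (k l : int) :
  usym K (k - 1) (l - 1) + l%:~R * usym K k l = sconst 1 k l.
Proof.
rewrite !usymE /sconst.
have [<-|kl] := eqVneq k l; last first.
  have -> : (k - 1 == l - 1) = false by apply/eqP => E; case/eqP: kl; lia.
  by rewrite mulr0 addr0; case: (k =P 0) => //; case: (l =P 0) => //; lia.
rewrite !eqxx /=; case: k => [[|m]|m].
- by rewrite /= fact0 mulr0 addr0.
- have -> : ((m.+1)%:Z - 1 < 0) = false by apply/negbTE; rewrite -Order.TotalTheory.leNgt; lia.
  by rewrite /= mulr0 addr0.
- have -> : (Negz m - 1 < 0) = true by lia.
  have -> : (`|Negz m - 1|%N).-1 = m.+1 by lia.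
  by rewrite /= factS natrM NegzE mulrNz; ring.
Qed.

Lemma sprod_ttau_usym : sprod (ttau K) (usym K) = sconst 1.
Proof.
apply/funext => k; apply/funext => l; rewrite /sprod.
rewrite (fsbigE [:: (0%N, 1, 1); (1%N, 1, 1)]) //; last first.
  move=> -[[n i] j] _; rewrite !inE /ttau /smono => not_term.
  case: (i =P 1) => [Ei|_]; last by rewrite /= !mulr0 mul0r.
  case: (j =P 1) => [Ej|_]; last by rewrite /= !mulr0 mul0r.
  by subst; case: n not_term => [|[|n]] // _; rewrite ffact_small // !mul0r.
rewrite !big_cons big_nil !classical_sets.in_setT /ttau /smono /=.
have -> : k + 0%:Z - 1 = k - 1 by lia.
have -> : l + 0%:Z - 1 = l - 1 by lia.
have -> : k + 1%:Z - 1 = k by lia.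
have -> : l + 1%:Z - 1 = l by lia.
rewrite !ffact0 !ffact1 fact0 factS fact0 !divr1 !mul1r !mulr1 addr0.
exact: usym_recurrence.
Qed.

Lemma sprod_usym_ttau : sprod (usym K) (ttau K) = sconst 1.
Proof.
apply/funext => k; apply/funext => l; rewrite /sprod.
rewrite (fsbigE [:: (0%N, k - 1, l - 1); (1%N, k, l)]) //; last first.
  move=> -[[n i] j] _; rewrite !inE /ttau /smono => not_term.
  case: (k + n%:Z - i =P 1) => [Ei|_]; last by rewrite /= !mulr0.
  case: (l + n%:Z - j =P 1) => [Ej|_]; last by rewrite andbF /= !mulr0.
  rewrite Ej; case: n not_term Ei Ej => [|[|n]] not_term Ei Ej.
  - by case/norP: not_term => /eqP[]; congr (_, _, _); lia.
  - by case/norP: not_term => _ /eqP[]; congr (_, _, _); lia.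
  by rewrite ffact_small // mulr0 !mul0r.
rewrite !big_cons big_nil !classical_sets.in_setT /ttau /smono /=.
have -> : k + 0%:Z - (k - 1) = 1 by lia.
have -> : l + 0%:Z - (l - 1) = 1 by lia.
have -> : k + 1%:Z - k = 1 by lia.
have -> : l + 1%:Z - l = 1 by lia.
rewrite !eqxx /= !ffact0 !ffact1 fact0 factS fact0 !divr1 !mul1r !mulr1 mulrC.
have diag : k%:~R * usym K k l = l%:~R * usym K k l.
  by rewrite usymE; have [->|] := eqVneq k l; rewrite ?mulr0.
by rewrite -(usym_recurrence k l) -diag; ring.
Qed.

End Symbols.

Section Matrices.
Variable K : numClosedFieldType.

Lemma sum_symbE (n : nat) (F : 'I_n -> symb K) (p q : int) :
  (\big[@sadd K/szero K]_(m < n) F m) p q = \sum_(m < n) F m p q.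
Proof. by apply: (big_ind2 (fun (A : symb K) s => A p q = s)) => // ? ? ? ? <- <-. Qed.

Lemma maddE (X Y : smat K) k l p q : madd X Y k l p q = X k l p q + Y k l p q.
Proof. by []. Qed.

Lemma mscaleE (c : K) (X : smat K) k l p q : mscale c X k l p q = c * X k l p q.
Proof. by []. Qed.

Lemma mbrE (s s' : bool) (X Y : smat K) k l p q :
  mbr s s' X Y k l p q = mmul X Y k l p q + (if s && s' then 1 else -1) * mmul Y X k l p q.
Proof. by []. Qed.

Lemma mbrC (s s' : bool) (X Y : smat K) :
  mbr s s' X Y = mscale (- (if s && s' then -1 else 1)) (mbr s' s Y X).
Proof.
do 4 apply/funext => ?; rewrite /mbr /madd /mscale /sadd /sscale andbC.
by case: (_ && _); ring.
Qed.

Lemma mhomogZ (s : bool) (c : K) (X : smat K) : mhomog s X -> mhomog s (mscale c X).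
Proof.
by case: s => homX k l par_kl; apply/funext => p; apply/funext => q;
  rewrite /mscale homX // /sscale /szero mulr0.
Qed.

Lemma gbrC (i j : nat) : gbr K i j = - (if godd i && godd j then -1 else 1) *: gbr K j i.
Proof. by apply/rowP => m; rewrite /gbr andbC !mxE; case: (_ && _); rewrite ?mxE; ring. Qed.

End Matrices.

(* Entries of the paper's matrices are scalar multiples of 1, t tau or u;
   [shape_mul] tabulates the products of two such symbols, so that brackets
   can be computed by evaluation. *)
Inductive shape := Szero | Sone | Stt | Su.

Section Representation.
Variables (K : numClosedFieldType) (a b : K).

Definition shape_sym (s : shape) : symb K :=
  match s with Szero => szero K | Sone => sconst 1 | Stt => ttau K | Su => usym K end.

Definition shape_mul (s s' : shape) : symb K :=
  match s, s' with
  | Szero, _ | _, Szero => szero K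
  | Sone, s | s, Sone => shape_sym s
  | Stt, Su | Su, Stt => sconst 1
  | Stt, Stt => sprod (ttau K) (ttau K)
  | Su, Su => sprod (usym K) (usym K)
  end.

Lemma sprod_shape (s s' : shape) : sprod (shape_sym s) (shape_sym s') = shape_mul s s'.
Proof.
by case: s; case: s';
  rewrite /= ?sprod0l ?sprod0r ?sprod1l ?sprod1r ?sprod_ttau_usym ?sprod_usym_ttau.
Qed.

(* Rows and columns are 0-based here, unlike in [Emat]. *)
Definition tildeX_entry (n k l : nat) : K * shape :=
  match n with
  | 0 => match k, l with 0, 3 => (b, Sone) | 2, 1 => (1, Su) | _, _ => (0, Szero) end
  | 1 => match k, l with 0, 3 => (-1, Stt) | 2, 1 => (a, Sone) | _, _ => (0, Szero) end
  | 2 => match k, l with 0, 2 => (1, Stt) | 3, 1 => (a, Sone) | _, _ => (0, Szero) end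
  | 3 => match k, l with 0, 2 => (b, Sone) | 3, 1 => (-1, Su) | _, _ => (0, Szero) end
  | 4 => match k, l with 1, 2 => (-1, Stt) | 3, 0 => (a, Sone) | _, _ => (0, Szero) end
  | 5 => match k, l with 1, 2 => (b, Sone) | 3, 0 => (1, Su) | _, _ => (0, Szero) end
  | 6 => match k, l with 1, 3 => (b, Sone) | 2, 0 => (-1, Su) | _, _ => (0, Szero) end
  | 7 => match k, l with 1, 3 => (1, Stt) | 2, 0 => (a, Sone) | _, _ => (0, Szero) end
  | 8 => match k, l with 0, 1 => (1, Sone) | _, _ => (0, Szero) end
  | 9 => match k, l with 0, 0 => (1, Sone) | 1, 1 => (-1, Sone) | _, _ => (0, Szero) end
  | 10 => match k, l with 1, 0 => (1, Sone) | _, _ => (0, Szero) end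
  | 11 => match k, l with 3, 2 => (1, Sone) | _, _ => (0, Szero) end
  | 12 => match k, l with 2, 2 => (1, Sone) | 3, 3 => (-1, Sone) | _, _ => (0, Szero) end
  | 13 => match k, l with 2, 3 => (1, Sone) | _, _ => (0, Szero) end
  | 14 => match k, l with 0, 0 | 1, 1 | 2, 2 | 3, 3 => (1, Sone) | _, _ => (0, Szero) end
  | 15 => match k, l with 0, 0 | 1, 1 | 2, 2 | 3, 3 => (1, Stt) | _, _ => (0, Szero) end
  | 16 => match k, l with 0, 0 | 1, 1 | 2, 2 | 3, 3 => (1, Su) | _, _ => (0, Szero) end
  | _ => (0, Szero)
  end.
Local Notation E := tildeX_entry.

Lemma tildeX_entryE (n : nat) (k l : 'I_4) : (n < 17)%N ->
  tildeX a b n k l = sscale (tildeX_entry n k l).1 (shape_sym (tildeX_entry n k l).2).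
Proof.
case: n => [|[|[|[|[|[|[|[|[|[|[|[|[|[|[|[|[|//]]]]]]]]]]]]]]]]] _;
  apply/funext => p; apply/funext => q;
  case: k => -[|[|[|[|?]]]] ? //; case: l => -[|[|[|[|?]]]] ? //;
  rewrite /tildeX /Emat /Ediag /madd /mzero /=;
  rewrite /sadd /sopp /cst /sconst /sscale /szero /=; try case: ifP => _; ring.
Qed.

Lemma tildeX_homog (n : nat) : (n < 17)%N -> mhomog (godd n) (tildeX a b n).
Proof.
rewrite /mhomog /godd leq_leb.
case: n => [|[|[|[|[|[|[|[|[|[|[|[|[|[|[|[|[|//]]]]]]]]]]]]]]]]] _;
  cbv beta iota delta [Nat.leb] => k l par_kl;
  rewrite tildeX_entryE //; apply/funext => p; apply/funext => q; move: par_kl;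
  case: k => -[|[|[|[|?]]]] ? //; case: l => -[|[|[|[|?]]]] ? //= _;
  cbv beta iota delta [tildeX_entry shape_sym sscale szero fst snd]; ring.
Qed.

Definition tcomb (c : 'I_17 -> K) : smat K :=
  \big[@madd K/mzero K]_(m < 17) mscale (c m) (tildeX a b m).

Lemma tcombE c k l p q : tcomb c k l p q = \sum_(m < 17) c m * tildeX a b m k l p q.
Proof. by apply: (big_ind2 (fun (X : smat K) s => X k l p q = s)) => // ? ? ? ? <- <-. Qed.

Ltac tcomb_at coord k l p q :=
  have := coord (@Ordinal 4 k isT) (@Ordinal 4 l isT) p q;
  rewrite [index_iota _ _]/= !big_cons big_nil;
  cbv beta iota delta [tildeX_entry shape_sym sscale szero fst snd nat_of_ord];
  rewrite /ttau /smono /sconst ?usymE /= ?fact0;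
  rewrite ?(mulr0, mul0r, mulr1, mulrN1, addr0, add0r);
  move/eqP; rewrite ?oppr_eq0 => /eqP.

Lemma tcomb_eq0 (c : 'I_17 -> K) : tcomb c = mzero K -> forall m, c m = 0.
Proof.
move=> c_eq0.
have coord (k l : 'I_4) (p q : int) :
    \sum_(0 <= m < 17) c (inord m) * (E m k l).1 * shape_sym (E m k l).2 p q = 0.
  rewrite big_mkord -[RHS]/(mzero K k l p q) -c_eq0 tcombE; apply: eq_bigr => m _.
  by rewrite inord_val tildeX_entryE // mulrA.
(* Only H1, H2 and C share their nonzero entries at the same monomial. *)
have c0 : c (inord 0) = 0 by tcomb_at coord 2%N 1%N (-1 : int) (-1 : int).
have c1 : c (inord 1) = 0 by tcomb_at coord 0%N 3%N (1 : int) (1 : int).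
have c2 : c (inord 2) = 0 by tcomb_at coord 0%N 2%N (1 : int) (1 : int).
have c3 : c (inord 3) = 0 by tcomb_at coord 3%N 1%N (-1 : int) (-1 : int).
have c4 : c (inord 4) = 0 by tcomb_at coord 1%N 2%N (1 : int) (1 : int).
have c5 : c (inord 5) = 0 by tcomb_at coord 3%N 0%N (-1 : int) (-1 : int).
have c6 : c (inord 6) = 0 by tcomb_at coord 2%N 0%N (-1 : int) (-1 : int).
have c7 : c (inord 7) = 0 by tcomb_at coord 1%N 3%N (1 : int) (1 : int).
have c8 : c (inord 8) = 0 by tcomb_at coord 0%N 1%N (0 : int) (0 : int).
have c10 : c (inord 10) = 0 by tcomb_at coord 1%N 0%N (0 : int) (0 : int).
have c11 : c (inord 11) = 0 by tcomb_at coord 3%N 2%N (0 : int) (0 : int).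
have c13 : c (inord 13) = 0 by tcomb_at coord 2%N 3%N (0 : int) (0 : int).
have c15 : c (inord 15) = 0 by tcomb_at coord 0%N 0%N (1 : int) (1 : int).
have c16 : c (inord 16) = 0 by tcomb_at coord 0%N 0%N (-1 : int) (-1 : int).
have H1C : c (inord 9) + c (inord 14) = 0 by tcomb_at coord 0%N 0%N (0 : int) (0 : int).
have H1C' : - c (inord 9) + c (inord 14) = 0 by tcomb_at coord 1%N 1%N (0 : int) (0 : int).
have H2C : c (inord 12) + c (inord 14) = 0 by tcomb_at coord 2%N 2%N (0 : int) (0 : int).
have c14 : c (inord 14) = 0.
  have : c (inord 14) *+ 2 = (c (inord 9) + c (inord 14)) + (- c (inord 9) + c (inord 14)).
    by ring.
  by rewrite H1C H1C' addr0 => /eqP; rewrite mulrn_eq0 /= => /eqP.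
have c9 : c (inord 9) = 0 by rewrite c14 addr0 in H1C.
have c12 : c (inord 12) = 0 by rewrite c14 addr0 in H2C.
case=> m lt_m17; rewrite (_ : Ordinal lt_m17 = inord m); last by rewrite -[LHS]inord_val.
by case: m lt_m17 => [|[|[|[|[|[|[|[|[|[|[|[|[|[|[|[|[|//]]]]]]]]]]]]]]]]].
Qed.

(* These factors are forced by the structure constants: e.g.
   [tildeT1, tildeT3] = (ab + 1) tildeE1 while [T1, T3] = E1. *)
Definition weight (m : nat) : K :=
  let kp := (a * b + 1)^-1 in
  match m with
  | 0 | 1 | 2 | 3 | 9 | 11 => 1
  | 4 | 7 => 2 * kp
  | 5 | 6 => -2 * kp
  | 8 => a * b + 1
  | 10 => -4 * kp
  | 12 | 13 => -1
  | 14 => -2 * (a * b - 1) * kp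
  | 15 => 2 * a * kp
  | 16 => 2 * b * kp
  | _ => 0
  end.

Definition rep (x : 'rV[K]_17) : smat K := tcomb (fun m => weight m * x ord0 m).

Lemma repD x y : rep (x + y) = madd (rep x) (rep y).
Proof.
do 4 apply/funext => ?; rewrite /madd /sadd /rep !tcombE -big_split /=.
by apply: eq_bigr => m _; rewrite mxE; ring.
Qed.

Lemma repZ c x : rep (c *: x) = mscale c (rep x).
Proof.
do 4 apply/funext => ?; rewrite /mscale /sscale /rep !tcombE mulr_sumr.
by apply: eq_bigr => m _; rewrite mxE; ring.
Qed.

Lemma repN x : rep (- x) = mscale (-1) (rep x).
Proof. by rewrite -scaleN1r repZ. Qed.

Lemma rep0 : rep 0 = mzero K.
Proof. by rewrite -(scale0r 0) repZ; do 4 apply/funext => ?; rewrite /mscale /sscale mul0r. Qed.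

Lemma rep_gb (n : nat) : (n < 17)%N -> rep (gb K n) = mscale (weight n) (tildeX a b n).
Proof.
move=> lt_n17; do 4 apply/funext => ?; rewrite /rep tcombE /mscale /sscale.
rewrite (bigD1 (Ordinal lt_n17)) //= big1 ?addr0 => [|m ne_mn].
  by rewrite mxE eqxx mulr1.
rewrite mxE; case: eqP => [eq_mn|]; last by rewrite mulr0 !mul0r.
by case/eqP: ne_mn; apply: val_inj.
Qed.

Lemma rep_homog (i : 'I_17) : mhomog (godd i) (rep (gb K i)).
Proof. by rewrite rep_gb //; apply/mhomogZ/tildeX_homog. Qed.

Section Brackets.
Hypothesis abD1_neq0 : a * b + 1 != 0.

Lemma mmul_tildeX (c d : K) (i j : nat) (k l : 'I_4) (p q : int) :
  (i < 17)%N -> (j < 17)%N ->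
  mmul (mscale c (tildeX a b i)) (mscale d (tildeX a b j)) k l p q =
  c * d * \sum_(m <- [:: 0; 1; 2; 3]%N)
    (E i k m).1 * (E j m l).1 * shape_mul (E i k m).2 (E j m l).2 p q.
Proof.
move=> lt_i17 lt_j17; rewrite /mmul sum_symbE -[[:: _; _; _; _]]/(index_iota 0 4).
rewrite big_mkord mulr_sumr; apply: eq_bigr => m _.
rewrite /mscale !tildeX_entryE // !sprodZl !sprodZr sprod_shape /sscale; ring.
Qed.

(* [eqn] rather than [==], so that [cbv] can filter the table. *)
Lemma gtabE (i j : nat) :
  gtab K i j = \sum_(e <- [seq e <- gtable K | eqn e.1.1 i && eqn e.1.2 j]) e.2.
Proof. by rewrite big_filter. Qed.

Definition bracket_preserved (i j : nat) : Prop :=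
  rep (gbr K i j) = mbr (godd i) (godd j) (rep (gb K i)) (rep (gb K j)).

Ltac check_bracket :=
  rewrite /bracket_preserved /gbr !gtabE;
  cbv beta iota zeta delta [filter gtable eqn fst snd andb
    iT1 iT2 iT3 iT4 iD1 iD2 iD3 iD4 iE1 iF1 iH1 iE2 iF2 iH2 iC iCp iCm];
  rewrite /godd !leq_leb ?big_cons !big_nil /= ?(repD, repZ, repN, rep0, rep_gb) //;
  let k := fresh "k" in let l := fresh "l" in
  apply/funext => k; apply/funext => l; do 2 apply/funext => ?;
  rewrite mbrE !mmul_tildeX // ?(maddE, mscaleE) ?tildeX_entryE // !big_cons !big_nil;
  case: k => -[|[|[|[|?]]]] ? //; case: l => -[|[|[|[|?]]]] ? //;
  cbv beta iota zeta delta [tildeX_entry shape_mul shape_sym weight sscale szero mzero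
    fst snd nat_of_ord andb Nat.leb];
  first [ring | field; by rewrite ?pnatr_eq0].

Ltac check_row := by case=> [|[|[|[|[|[|[|[|[|[|[|[|[|[|[|[|[|//]]]]]]]]]]]]]]]]] // _; check_bracket.

Lemma bracket_preserved_T1 : forall j, (0 <= j < 17)%N -> bracket_preserved 0 j.
Proof. check_row. Qed.

Lemma bracket_preserved_T2 : forall j, (1 <= j < 17)%N -> bracket_preserved 1 j.
Proof. check_row. Qed.

Lemma bracket_preserved_T3 : forall j, (2 <= j < 17)%N -> bracket_preserved 2 j.
Proof. check_row. Qed.

Lemma bracket_preserved_T4 : forall j, (3 <= j < 17)%N -> bracket_preserved 3 j.
Proof. check_row. Qed.

Lemma bracket_preserved_D1 : forall j, (4 <= j < 17)%N -> bracket_preserved 4 j.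
Proof. check_row. Qed.

Lemma bracket_preserved_D2 : forall j, (5 <= j < 17)%N -> bracket_preserved 5 j.
Proof. check_row. Qed.

Lemma bracket_preserved_D3 : forall j, (6 <= j < 17)%N -> bracket_preserved 6 j.
Proof. check_row. Qed.

Lemma bracket_preserved_D4 : forall j, (7 <= j < 17)%N -> bracket_preserved 7 j.
Proof. check_row. Qed.

Lemma bracket_preserved_E1 : forall j, (8 <= j < 17)%N -> bracket_preserved 8 j.
Proof. check_row. Qed.

Lemma bracket_preserved_H1 : forall j, (9 <= j < 17)%N -> bracket_preserved 9 j.
Proof. check_row. Qed.

Lemma bracket_preserved_F1 : forall j, (10 <= j < 17)%N -> bracket_preserved 10 j.
Proof. check_row. Qed.

Lemma bracket_preserved_E2 : forall j, (11 <= j < 17)%N -> bracket_preserved 11 j.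
Proof. check_row. Qed.

Lemma bracket_preserved_H2 : forall j, (12 <= j < 17)%N -> bracket_preserved 12 j.
Proof. check_row. Qed.

Lemma bracket_preserved_F2 : forall j, (13 <= j < 17)%N -> bracket_preserved 13 j.
Proof. check_row. Qed.

Lemma bracket_preserved_C : forall j, (14 <= j < 17)%N -> bracket_preserved 14 j.
Proof. check_row. Qed.

Lemma bracket_preserved_Cp : forall j, (15 <= j < 17)%N -> bracket_preserved 15 j.
Proof. check_row. Qed.

Lemma bracket_preserved_Cm : forall j, (16 <= j < 17)%N -> bracket_preserved 16 j.
Proof. check_row. Qed.

Lemma rep_bracket_le (i j : nat) : (i <= j < 17)%N ->
  rep (gbr K i j) = mbr (godd i) (godd j) (rep (gb K i)) (rep (gb K j)).
Proof.
case: i => [|[|[|[|[|[|[|[|[|[|[|[|[|[|[|[|[|i]]]]]]]]]]]]]]]]];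
  [ exact: bracket_preserved_T1 | exact: bracket_preserved_T2 | exact: bracket_preserved_T3
     | exact: bracket_preserved_T4 | exact: bracket_preserved_D1 | exact: bracket_preserved_D2
     | exact: bracket_preserved_D3 | exact: bracket_preserved_D4 | exact: bracket_preserved_E1
     | exact: bracket_preserved_H1 | exact: bracket_preserved_F1 | exact: bracket_preserved_E2
     | exact: bracket_preserved_H2 | exact: bracket_preserved_F2 | exact: bracket_preserved_C
     | exact: bracket_preserved_Cp | exact: bracket_preserved_Cm
     | by case/andP=> /leq_ltn_trans le_j /le_j ].
Qed.

Lemma rep_bracket (i j : 'I_17) :
  rep (gbr K i j) = mbr (godd i) (godd j) (rep (gb K i)) (rep (gb K j)).
Proof.
have [le_ij|lt_ji] := leqP i j; first by apply: rep_bracket_le; rewrite le_ij ltn_ord.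
by rewrite gbrC repZ rep_bracket_le ?(ltnW lt_ji) ?ltn_ord // -mbrC.
Qed.

End Brackets.

Section Nondegenerate.
Hypotheses (a_neq0 : a != 0) (b_neq0 : b != 0).
Hypotheses (abD1_neq0 : a * b + 1 != 0) (abB1_neq0 : a * b - 1 != 0).

Lemma weight_neq0 (m : 'I_17) : weight m != 0.
Proof.
have two_neq0 : (2 : K) != 0 by rewrite pnatr_eq0.
have four_neq0 : (4 : K) != 0 by rewrite pnatr_eq0.
have inv_neq0 : (a * b + 1)^-1 != 0 by rewrite invr_eq0.
case: m => -[|[|[|[|[|[|[|[|[|[|[|[|[|[|[|[|[|//]]]]]]]]]]]]]]]]] _ /=;
  by rewrite ?mulf_neq0 ?oppr_eq0 ?oner_eq0 ?mulNr.
Qed.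

Lemma rep_inj : injective rep.
Proof.
move=> x y rep_xy; apply/rowP => m.
have rep_sub0 : tcomb (fun m => weight m * (x - y) ord0 m) = mzero K.
  rewrite -/(rep (x - y)) repD repN rep_xy.
  by do 4 apply/funext => ?; rewrite /madd /mscale /sadd /sscale /mzero /szero; ring.
have /eqP := tcomb_eq0 rep_sub0 m.
by rewrite mulf_eq0 (negbTE (weight_neq0 m)) /= !mxE subr_eq0 => /eqP.
Qed.

Lemma rep_span (X : smat K) : (exists x, rep x = X) <-> in_span a b X.
Proof.
split=> [[x <-]|[c ->]]; first by exists (fun m : 'I_17 => weight m * x ord0 m).
exists (\row_m (c m / weight m)); rewrite /rep /tcomb; apply: eq_bigr => m _.
by rewrite mxE mulrC divfK ?weight_neq0.
Qed.

End Nondegenerate.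

End Representation.

Theorem theorem4p2 (K : numClosedFieldType) (a b : K)
  (hab0 : a * b != 0) (hab1 : a * b != 1) (hab2 : a * b != -1) :
  exists f : 'rV[K]_17 -> smat K,
    (forall x y, f (x + y) = madd (f x) (f y)) /\
        (forall (c : K) x, f (c *: x) = mscale c (f x)) /\
        (forall i : 'I_17, mhomog (godd i) (f (gb K i))) /\
        (forall i j : 'I_17,
            f (gbr K i j) = mbr (godd i) (godd j) (f (gb K i)) (f (gb K j))) /\
        injective f /\
        (forall X : smat K, (exists x, f x = X) <-> in_span a b X).
Proof.
have /andP[a_neq0 b_neq0] : (a != 0) && (b != 0) by rewrite -negb_or -mulf_eq0.
have abD1_neq0 : a * b + 1 != 0 by rewrite addr_eq0.
have abB1_neq0 : a * b - 1 != 0 by rewrite subr_eq0.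
exists (rep a b); split; first exact: repD.
split; first exact: repZ.
split; first exact: rep_homog.
split; first exact: rep_bracket.
split; [exact: rep_inj | exact: rep_span].
Qed.
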